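(* Let $n\ge 1$. For $i,j\in\{1,\dots,n\}$ let $L_i>0$, $\mu_i>0$, $\theta_i\ge 0$ and $\gamma_{ij}\ge 0$ be real numbers with $\gamma_{ii}=0$ and $\gamma_{ij}=\gamma_{ji}$ for all $i,j$. Let $A$ be the $n\times n$ real matrix with entries $$A_{ii}=-\Big(\frac{\mu_i}{L_i}+\theta_i+\sum_{j=1}^n\frac{\gamma_{ij}}{L_i}\Big),\qquad A_{ij}=\frac{\gamma_{ij}}{L_j}\quad (i\neq j).$$ Then every eigenvalue of $A$ has negative real part.
   Context: This matrix is the coefficient matrix of the linear inventory model $y'(t)=Ay(t)+b$ for $n$ warehouses in one echelon, where $L_i$ is the maximum inventory level of warehouse $i$, $\mu_i$ its maximum supply rate, $\theta_i$ its deterioration percentage per unit time, and $\gamma_{ij}$ the maximum lateral transshipment rate from warehouse $i$ to warehouse $j$. *)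

From HB Require Import structures.
From mathcomp Require Import all_boot all_order all_algebra.
From mathcomp Require Import complex.
Set Implicit Arguments. Unset Strict Implicit. Unset Printing Implicit Defensive.
Import Order.TTheory GRing.Theory Num.Theory.
Local Open Scope ring_scope.

(* Coefficient matrix A of the linear inventory model y' = A y + b. *)
Definition inventory_matrix (R : rcfType) (n : nat)
  (L mu theta : 'I_n -> R) (gamma : 'I_n -> 'I_n -> R) : 'M[R]_n :=
  \matrix_(i < n, j < n)
    if i == j then - (mu i / L i + theta i + \sum_(k < n) gamma i k / L i)
    else gamma i j / L j.

Definition complexify (R : rcfType) (n : nat) (A : 'M[R]_n) : 'M[complex R]_n :=
  map_mx (fun x : R => Complex x 0) A.

(* Thanks to the symmetry of gamma, the off-diagonal entries of column j of A
   sum to sum_k gamma_jk / L_j, so the diagonal entry A_jj is negative and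
   exceeds that sum in absolute value by mu_j / L_j + theta_j > 0. The column
   version of Gershgorin's theorem (applied through a left eigenvector) puts
   every eigenvalue in a disc centred at some A_jj whose radius is smaller
   than |A_jj|, hence in the open left half-plane. *)

From HB Require Import structures.
From mathcomp Require Import all_boot all_order all_algebra.
From mathcomp Require Import complex.
From mathcomp Require Import lra.
Set Implicit Arguments. Unset Strict Implicit. Unset Printing Implicit Defensive.
Import Order.TTheory GRing.Theory Num.Theory.
Local Open Scope ring_scope.

Section ComplexNorm.
Variable R : rcfType.
Implicit Types x : R[i].
Local Notation normc := (@Normc.normc R).

Lemma normc_ge0 x : 0 <= normc x.
Proof. exact: (@normr_ge0 _ (Rcomplex R)). Qed.

Lemma normc_gt0 x : x != 0 -> 0 < normc x.
Proof.
move=> x0; rewrite lt_def normc_ge0 andbT.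
by apply: contra x0 => /eqP/Normc.eq0_normc ->.
Qed.

Lemma normc_sum (I : finType) (P : pred I) (F : I -> R[i]) :
  normc (\sum_(i | P i) F i) <= \sum_(i | P i) normc (F i).
Proof. exact: (@ler_norm_sum _ (Rcomplex R)). Qed.

Lemma normc_real (a : R) : normc (Complex a 0) = `|a|.
Proof. by rewrite /Normc.normc expr0n /= addr0 sqrtr_sqr. Qed.

Lemma Re_le_normc x : complex.Re x <= normc x.
Proof.
case: x => a b /=; apply: le_trans (ler_norm a) _.
by rewrite -sqrtr_sqr ler_sqrt ?addr_ge0 ?sqr_ge0 // lerDl sqr_ge0.
Qed.

End ComplexNorm.

Lemma eigenvalue_col_gershgorin (R : rcfType) (n : nat) (B : 'M[R[i]]_n) z :
  eigenvalue B z ->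
  exists j, Normc.normc (z - B j j) <= \sum_(i | i != j) Normc.normc (B i j).
Proof.
move=> /eigenvalueP [v vB v0].
have [k vk0] : exists k, v 0 k != 0.
  apply/existsP; apply: contraNT v0 => /existsPn v_eq0.
  by apply/eqP/matrixP => i k; rewrite ord1 mxE; apply/eqP/negPn/v_eq0.
have [j _ vj_max] := arg_maxP (fun i => Normc.normc (v 0 i)) (isT : xpredT k).
have vj_gt0 : 0 < Normc.normc (v 0 j).
  exact: lt_le_trans (normc_gt0 vk0) (vj_max k isT).
have vj_eq : (z - B j j) * v 0 j = \sum_(i | i != j) v 0 i * B i j.
  move/matrixP/(_ 0 j): vB; rewrite !mxE (bigD1 j) //= => v_zj.
  by rewrite mulrBl -v_zj [B j j * _]mulrC addrAC subrr add0r.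
exists j; rewrite -(ler_pM2r vj_gt0) -Normc.normcM vj_eq mulr_suml.
apply: le_trans (normc_sum _ _) _; apply: ler_sum => i _.
by rewrite Normc.normcM mulrC ler_wpM2l ?normc_ge0 //; apply: vj_max.
Qed.

Lemma col_dominant_eigenvalue_Re_lt0 (R : rcfType) (n : nat) (A : 'M[R]_n) :
  (forall j, A j j + \sum_(i | i != j) `|A i j| < 0) ->
  forall z, eigenvalue (complexify A) z -> complex.Re z < 0.
Proof.
move=> dominant z /eigenvalue_col_gershgorin [j].
under eq_bigr do rewrite mxE normc_real.
rewrite mxE => disc_j.
have Re_shift : complex.Re (z - Complex (A j j) 0) = complex.Re z - A j j.
  by case: z {disc_j}.
have := le_trans (Re_le_normc _) disc_j; rewrite Re_shift.
by have := dominant j; lra.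
Qed.

Lemma inventory_matrix_col_excess (R : rcfType) (n : nat)
    (L mu theta : 'I_n -> R) (gamma : 'I_n -> 'I_n -> R) :
    (forall i, 0 < L i) -> (forall i j, 0 <= gamma i j) ->
    (forall i, gamma i i = 0) -> (forall i j, gamma i j = gamma j i) ->
  forall j, let A := inventory_matrix L mu theta gamma in
  A j j + \sum_(i | i != j) `|A i j| = - (mu j / L j + theta j).
Proof.
move=> hL hgamma hdiag hsym j A.
have col_sum : \sum_(i | i != j) `|A i j| = \sum_(k < n) gamma j k / L j.
  rewrite [RHS](bigD1 j) //= hdiag mul0r add0r.
  apply: eq_bigr => i ij; rewrite mxE (negbTE ij) hsym.
  by rewrite ger0_norm // divr_ge0 // ltW.
by rewrite col_sum mxE eqxx; lra.
Qed.

Theorem lemma1 (R : rcfType) (n : nat) (hn : (0 < n)%N)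
  (L mu theta : 'I_n -> R) (gamma : 'I_n -> 'I_n -> R)
  (hL : forall i, 0 < L i) (hmu : forall i, 0 < mu i)
  (htheta : forall i, 0 <= theta i)
  (hgamma : forall i j, 0 <= gamma i j)
  (hdiag : forall i, gamma i i = 0)
  (hsym : forall i j, gamma i j = gamma j i) :
  forall z : complex R,
    eigenvalue (complexify (inventory_matrix L mu theta gamma)) z ->
    complex.Re z < 0.
Proof.
apply: col_dominant_eigenvalue_Re_lt0 => j.
rewrite inventory_matrix_col_excess //.
have := divr_gt0 (hmu j) (hL j); have := htheta j; lra.
Qed.
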